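(* Assume the labeled data contain at least one point with $y_i=1$ and at least one with $y_i=-1$, $\tau\in\{0,\dots,m\}$, and let $M_0$ be the valid big-$M$ $M_0:=2\sqrt{2(2C_1\bar n+C_2(m-\tau))}\max_{i}\|x^i\|+1$ with $\bar n:=|\{i\in[1,n]:y_i=-1\}|$. Let $(\bar\omega,\bar b,\bar\xi,\bar\eta,\bar z)$ be a feasible point of (P3) (with constant $M_0$) with objective value $\bar f$, and let $(\omega^*,b^*,\xi^*,\eta^*,z^* )$ be an optimal solution of (P3) (with constant $M_0$) with optimal value $f^*$. Let $P_u:=\{i\in[n+1,N]:(\omega^* )^\top x^i+b^*>0\}$, $N_u:=\{i\in[n+1,N]:(\omega^* )^\top x^i+b^*<0\}$, let $S_p\subseteq P_u$, $S_n\subseteq N_u$ be arbitrary, and let $s\in[n+1,N]\setminus(S_p\cup S_n)$ with $\bar\omega^\top x^s+\bar b<0$. Consider Problem (P5) with constant $M:=2\sqrt{2\bar f}\max_{i\in[1,N]}\|x^i\|+1$. Then: (a) the objective value $\tilde f$ of any feasible point of (P5) satisfies $f^*\le\tilde f$; (b) if $\tilde f$ is the optimal value of (P5) and $\bar f<\tilde f$, then $(\omega^* )^\top x^s+b^*<0$, i.e., $s\in N_u$.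
   Context: Data: points $x^1,\dots,x^N\in\mathbb{R}^d$; the first $n$ are labeled with $y_i\in\{-1,1\}$, the remaining $m:=N-n$ points are unlabeled; $[a,b]=\{a,\dots,b\}$; Euclidean norm. Parameters $C_1,C_2>0$, integer $\tau$. Objective $F(\omega,\xi,\eta):=\tfrac12\|\omega\|^2+C_1\sum_{i=1}^n\xi_i+C_2(\eta_1+\eta_2)$. Problem (P3) with constant $M$: minimize $F$ over $\omega\in\mathbb{R}^d,b\in\mathbb{R},\xi\in\mathbb{R}^n,\eta\in\mathbb{R}^2$, $z_i\in\{0,1\}$ ($i\in[n+1,N]$) subject to $y_i(\omega^\top x^i+b)\ge1-\xi_i$ ($i\in[1,n]$); $-(1-z_i)M\le\omega^\top x^i+b\le z_iM$ ($i\in[n+1,N]$); $\tau-\eta_1\le\sum_{i=n+1}^Nz_i\le\tau+\eta_2$; $\xi\ge0$; $\eta\ge0$. Problem (P5) (for given $S_p,S_n,s$ and constant $M$): minimize $F$ over $\omega,b,\xi,\eta$ and $z_i\in\{0,1\}$ for $i\in[n+1,N]\setminus(S_p\cup S_n)$, subject to $y_i(\omega^\top x^i+b)\ge1-\xi_i$ ($i\in[1,n]$); $-(1-z_i)M\le\omega^\top x^i+b\le z_iM$ for $i\in[n+1,N]\setminus(\{s\}\cup S_p\cup S_n)$; $\omega^\top x^i+b\ge0$ for $i\in S_p$; $\omega^\top x^i+b\le0$ for $i\in S_n$; $0\le\omega^\top x^s+b\le z_sM$; $\tau-\eta_1\le|S_p|+\sum_{i\in[n+1,N]\setminus(S_p\cup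 S_n)}z_i\le\tau+\eta_2$; $\xi_i\ge0$ ($i\in[1,n]$); $\eta_1,\eta_2\ge0$. *)

From mathcomp Require Import all_boot all_order all_algebra.
Set Implicit Arguments. Unset Strict Implicit. Unset Printing Implicit Defensive.
Import Order.TTheory GRing.Theory Num.Theory.
Local Open Scope ring_scope.

(* Points of R^d are functions 'I_d -> R.
   Labeled points x^1..x^n are xl : 'I_n -> ('I_d -> R) with labels yl,
   unlabeled points x^{n+1}..x^N are xu : 'I_m -> ('I_d -> R) (N = n + m). *)

Definition dot (R : rcfType) (d : nat) (u v : 'I_d -> R) : R :=
  \sum_(k < d) u k * v k.

Definition enorm (R : rcfType) (d : nat) (u : 'I_d -> R) : R :=
  Num.sqrt (dot u u).

(* max_{i in [1,N]} ||x^i||  (norms are >= 0, so 0 is a neutral start) *)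
Definition maxnorm (R : rcfType) (d n m : nat)
  (xl : 'I_n -> 'I_d -> R) (xu : 'I_m -> 'I_d -> R) : R :=
  Num.max (\big[Num.max/0]_(i < n) enorm (xl i))
          (\big[Num.max/0]_(j < m) enorm (xu j)).

Definition b2R (R : rcfType) (b : bool) : R := (b : nat)%:R.

Definition objF (R : rcfType) (d n : nat) (C1 C2 : R)
  (w : 'I_d -> R) (xi : 'I_n -> R) (eta1 eta2 : R) : R :=
  1 / 2 * enorm w ^+ 2 + C1 * \sum_(i < n) xi i + C2 * (eta1 + eta2).

Definition P3_feasible (R : rcfType) (d n m : nat)
  (xl : 'I_n -> 'I_d -> R) (yl : 'I_n -> R) (xu : 'I_m -> 'I_d -> R)
  (tau : nat) (M : R)
  (w : 'I_d -> R) (b : R) (xi : 'I_n -> R) (eta1 eta2 : R) (z : 'I_m -> bool)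
  : Prop :=
  [/\ (forall i, 1 - xi i <= yl i * (dot w (xl i) + b)),
      (forall j, - (1 - b2R R (z j)) * M <= dot w (xu j) + b
                 /\ dot w (xu j) + b <= b2R R (z j) * M),
      (tau%:R - eta1 <= \sum_(j < m) b2R R (z j)
        /\ \sum_(j < m) b2R R (z j) <= tau%:R + eta2),
      (forall i, 0 <= xi i) &
      (0 <= eta1 /\ 0 <= eta2)].

Definition P3_optimal (R : rcfType) (d n m : nat) (C1 C2 : R)
  (xl : 'I_n -> 'I_d -> R) (yl : 'I_n -> R) (xu : 'I_m -> 'I_d -> R)
  (tau : nat) (M : R)
  (w : 'I_d -> R) (b : R) (xi : 'I_n -> R) (eta1 eta2 : R) (z : 'I_m -> bool)
  : Prop :=
  P3_feasible xl yl xu tau M w b xi eta1 eta2 z /\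
  forall w' b' xi' eta1' eta2' z',
    P3_feasible xl yl xu tau M w' b' xi' eta1' eta2' z' ->
    objF C1 C2 w xi eta1 eta2 <= objF C1 C2 w' xi' eta1' eta2'.

(* The variables
   z_j are only meaningful for j outside Sp :|: Sn; the values of z on
   Sp :|: Sn never enter any constraint nor the objective. *)
Definition P5_feasible (R : rcfType) (d n m : nat)
  (xl : 'I_n -> 'I_d -> R) (yl : 'I_n -> R) (xu : 'I_m -> 'I_d -> R)
  (tau : nat) (Sp Sn : {set 'I_m}) (s : 'I_m) (M : R)
  (w : 'I_d -> R) (b : R) (xi : 'I_n -> R) (eta1 eta2 : R) (z : 'I_m -> bool)
  : Prop :=
  [/\ (forall i, 1 - xi i <= yl i * (dot w (xl i) + b)),
      (forall j, j \notin s |: (Sp :|: Sn) ->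
          - (1 - b2R R (z j)) * M <= dot w (xu j) + b
          /\ dot w (xu j) + b <= b2R R (z j) * M),
      ((forall j, j \in Sp -> 0 <= dot w (xu j) + b)
        /\ (forall j, j \in Sn -> dot w (xu j) + b <= 0)
        /\ (0 <= dot w (xu s) + b /\ dot w (xu s) + b <= b2R R (z s) * M)),
      (tau%:R - eta1 <= #|Sp|%:R + \sum_(j < m | j \notin Sp :|: Sn) b2R R (z j)
        /\ #|Sp|%:R + \sum_(j < m | j \notin Sp :|: Sn) b2R R (z j) <= tau%:R + eta2) &
      [/\ (forall i, 0 <= xi i), 0 <= eta1 & 0 <= eta2]].

Definition P5_optimal (R : rcfType) (d n m : nat) (C1 C2 : R)
  (xl : 'I_n -> 'I_d -> R) (yl : 'I_n -> R) (xu : 'I_m -> 'I_d -> R)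
  (tau : nat) (Sp Sn : {set 'I_m}) (s : 'I_m) (M : R)
  (w : 'I_d -> R) (b : R) (xi : 'I_n -> R) (eta1 eta2 : R) (z : 'I_m -> bool)
  : Prop :=
  P5_feasible xl yl xu tau Sp Sn s M w b xi eta1 eta2 z /\
  forall w' b' xi' eta1' eta2' z',
    P5_feasible xl yl xu tau Sp Sn s M w' b' xi' eta1' eta2' z' ->
    objF C1 C2 w xi eta1 eta2 <= objF C1 C2 w' xi' eta1' eta2'.

Definition bigM0 (R : rcfType) (d n m : nat) (C1 C2 : R)
  (xl : 'I_n -> 'I_d -> R) (yl : 'I_n -> R) (xu : 'I_m -> 'I_d -> R)
  (tau : nat) : R :=
  let nbar := #|[set i : 'I_n | yl i == -1]| in
  2 * Num.sqrt (2 * (2 * C1 * nbar%:R + C2 * (m - tau)%:R))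
    * maxnorm xl xu + 1.

From mathcomp Require Import all_boot all_order all_algebra.
From mathcomp Require Import ring lra.
Set Implicit Arguments. Unset Strict Implicit.
Import Order.TTheory GRing.Theory Num.Theory.
Local Open Scope ring_scope.

(* The argument rests on one geometric observation, "bias clamping": since
   both classes occur among the labeled points, a bias b with
   |b| > ||w|| * max_i ||x^i|| + 1 can be moved to the boundary of that range
   without increasing any slack (and strictly decreasing their sum), while
   every unlabeled score w.x + b only moves towards 0 and keeps its sign.
   Consequences:
   - an optimal point of (P3) has |b*| <= ||w*|| max ||x^i|| + 1, so all its
     unlabeled scores are bounded by 2 ||w*|| max ||x^i|| + 1;
   - (a) a feasible point of (P5) becomes, after clamping and fixing the
     indicators on Sp/Sn, a feasible point of (P3) with constant M0 (its norm
     is controlled by the value of the trivial classifier w = 0, b = 1);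
   - (b) if w*.x^s + b* >= 0, then the optimum of (P3) is itself feasible
     for (P5), so the optimal value of (P5) is at most f* <= fbar. *)

Lemma one_neq_opp1 (R : realDomainType) : ((1 : R) == -1) = false.
Proof. by apply/negbTE/eqP; lra. Qed.

Section EuclideanSpace.
Variables (R : rcfType) (d : nat).
Implicit Types u v : 'I_d -> R.

Lemma dot_ge0 u : 0 <= dot u u.
Proof. by apply: sumr_ge0 => k _; rewrite -expr2 sqr_ge0. Qed.

Lemma enorm_sq u : enorm u ^+ 2 = dot u u.
Proof. by rewrite /enorm sqr_sqrtr // dot_ge0. Qed.

Lemma lagrange_identity u v :
  \sum_i \sum_j (u i * v j - u j * v i) ^+ 2
  = 2 * (dot u u * dot v v - dot u v ^+ 2).
Proof.
have Euv : dot u u * dot v v = \sum_i \sum_j (u i * u i) * (v j * v j).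
  by rewrite /dot big_distrlr.
have Evu : dot u u * dot v v = \sum_i \sum_j (u j * u j) * (v i * v i).
  rewrite mulrC /dot big_distrlr /=.
  by apply: eq_bigr => i _; apply: eq_bigr => j _; rewrite mulrC.
have Ecross : dot u v ^+ 2 = \sum_i \sum_j (u i * v i) * (u j * v j).
  by rewrite expr2 /dot big_distrlr.
have -> : 2 * (dot u u * dot v v - dot u v ^+ 2)
          = dot u u * dot v v + dot u u * dot v v - 2 * dot u v ^+ 2 by ring.
rewrite {1}Euv Evu Ecross mulr_sumr -big_split /= -sumrB; apply: eq_bigr => i _.
rewrite mulr_sumr -big_split /= -sumrB; apply: eq_bigr => j _; ring.
Qed.

Lemma cauchy_schwarz u v : `|dot u v| <= enorm u * enorm v.
Proof.
have sq_le : dot u v ^+ 2 <= dot u u * dot v v.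
  have : 0 <= \sum_i \sum_j (u i * v j - u j * v i) ^+ 2.
    by do 2![apply: sumr_ge0 => ? _]; exact: sqr_ge0.
  by rewrite lagrange_identity pmulr_rge0 // subr_ge0.
by rewrite /enorm -sqrtrM ?dot_ge0 // -sqrtr_sqr ler_sqrt // mulr_ge0 ?dot_ge0.
Qed.

End EuclideanSpace.

Section MaxNorm.
Variables (R : rcfType) (d n m : nat).
Variables (xl : 'I_n -> 'I_d -> R) (xu : 'I_m -> 'I_d -> R).

Lemma maxnorm_labeled i : enorm (xl i) <= maxnorm xl xu.
Proof. by rewrite /maxnorm le_max le_bigmax. Qed.

Lemma maxnorm_unlabeled j : enorm (xu j) <= maxnorm xl xu.
Proof. by rewrite /maxnorm le_max orbC le_bigmax. Qed.

Lemma score_bound (w x : 'I_d -> R) :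
  enorm x <= maxnorm xl xu -> `|dot w x| <= enorm w * maxnorm xl xu.
Proof.
move=> hx; apply: le_trans (cauchy_schwarz w x) (ler_wpM2l _ hx).
exact: sqrtr_ge0.
Qed.

End MaxNorm.

Section Objective.
Variables (R : rcfType) (d n : nat) (C1 C2 : R).
Hypotheses (hC1 : 0 < C1) (hC2 : 0 < C2).
Implicit Types (w : 'I_d -> R) (xi : 'I_n -> R).

Lemma enorm_le_objF w xi e1 e2 :
  (forall i, 0 <= xi i) -> 0 <= e1 -> 0 <= e2 ->
  enorm w <= Num.sqrt (2 * objF C1 C2 w xi e1 e2).
Proof.
move=> hxi he1 he2; rewrite {1}/enorm ler_wsqrtr // /objF enorm_sq.
have : 0 <= C1 * \sum_i xi i by rewrite mulr_ge0 ?sumr_ge0 // ltW.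
have : 0 <= C2 * (e1 + e2) by rewrite mulr_ge0 ?addr_ge0 // ltW.
lra.
Qed.

Lemma objF_le_slack w xi xi' e1 e2 :
  \sum_i xi' i <= \sum_i xi i -> objF C1 C2 w xi' e1 e2 <= objF C1 C2 w xi e1 e2.
Proof. by move=> h; rewrite /objF lerD2r lerD2l ler_pM2l. Qed.

Lemma objF_lt_slack w xi xi' e1 e2 :
  \sum_i xi' i < \sum_i xi i -> objF C1 C2 w xi' e1 e2 < objF C1 C2 w xi e1 e2.
Proof. by move=> h; rewrite /objF ltrD2r ltrD2l ltr_pM2l. Qed.

End Objective.

Lemma sum_lt_pointwise (R : numDomainType) (I : finType) (F G : I -> R) i0 :
  (forall i, F i <= G i) -> F i0 < G i0 -> \sum_i F i < \sum_i G i.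
Proof.
move=> hle hlt; rewrite [ltLHS](bigD1 i0) // [ltRHS](bigD1 i0) //=.
by rewrite ltr_leD // ler_sum.
Qed.

(* [t'] lies between 0 and [t]: the relation between a score before and after
   clamping the bias. *)
Definition shrinks (R : numDomainType) (t t' : R) : Prop :=
  (0 <= t -> 0 <= t' <= t) /\ (t <= 0 -> t <= t' <= 0).

(* Bias clamping from above, on real scores [a i] bounded by [W]: replacing a
   bias [b > W + 1] by [W + 1] keeps the margin constraints after lowering the
   slack of every negative point by [b - (W + 1)]. *)
Lemma lower_bias (R : realFieldType) n (a y xi : 'I_n -> R) (W b : R) :
  (forall i, y i = 1 \/ y i = -1) -> (exists i, y i = -1) ->
  (forall i, `|a i| <= W) -> W + 1 < b ->
  (forall i, 1 - xi i <= y i * (a i + b)) -> (forall i, 0 <= xi i) ->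
  exists xi' : 'I_n -> R,
    [/\ forall i, 1 - xi' i <= y i * (a i + (W + 1)),
        forall i, 0 <= xi' i & \sum_i xi' i < \sum_i xi i].
Proof.
move=> hy [i0 hi0] ha hb hm hxi.
exists (fun i => if y i == -1 then xi i - (b - (W + 1)) else xi i).
have bounds i : -W <= a i <= W by rewrite -ler_norml.
split.
- move=> i; have := hm i; have := hxi i; have /andP[? ?] := bounds i.
  by case: (hy i) => ->; rewrite ?eqxx ?one_neq_opp1 => *; lra.
- move=> i; have := hm i; have := hxi i; have /andP[? ?] := bounds i.
  by case: (hy i) => ->; rewrite ?eqxx ?one_neq_opp1 => *; lra.
- apply: (sum_lt_pointwise (i0 := i0)) => [i|]; last by rewrite hi0 eqxx; lra.
  by case: ifP => _ //; lra.
Qed.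

(* Bias clamping in both directions: the bias can be brought into
   [[-(W + 1), W + 1]] without increasing the total slack (decreasing it
   strictly when the bias moves), while any score [v + b] with [|v| <= W] only
   moves towards 0.  Clamping from below is clamping from above for the
   negated scores, labels and bias. *)
Lemma bias_clamp (R : realFieldType) n (a y xi : 'I_n -> R) (W b : R) :
  (forall i, y i = 1 \/ y i = -1) ->
  (exists i, y i = 1) -> (exists i, y i = -1) ->
  (forall i, `|a i| <= W) ->
  (forall i, 1 - xi i <= y i * (a i + b)) -> (forall i, 0 <= xi i) ->
  exists (b' : R) (xi' : 'I_n -> R),
    [/\ forall i, 1 - xi' i <= y i * (a i + b'),
        forall i, 0 <= xi' i,
        `|b'| <= W + 1,
        \sum_i xi' i <= \sum_i xi i /\ (W + 1 < `|b| -> \sum_i xi' i < \sum_i xi i)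
      & forall v, `|v| <= W -> shrinks (v + b) (v + b')].
Proof.
move=> hy [i1 hi1] hneg ha hm hxi.
have W_ge0 : 0 <= W := le_trans (normr_ge0 _) (ha i1).
have [b_big | b_le] := ltrP (W + 1) b.
  have [xi' [hm' hxi' hlt]] := lower_bias hy hneg ha b_big hm hxi.
  exists (W + 1), xi'; split => //.
  - by rewrite ger0_norm //; lra.
  - by split => [|_]; [exact: ltW|].
  - by move=> v; rewrite ler_norml => /andP[? ?]; split => ?; lra.
have [b_small | b_ge] := ltrP b (- (W + 1)).
  have [||||||xi' [hm' hxi' hlt]] := @lower_bias R n (fun i => - a i) (fun i => - y i)
      xi W (- b).
  - by move=> i; case: (hy i) => ->; [right | left]; rewrite ?opprK.
  - by exists i1; rewrite hi1.
  - by move=> i; rewrite normrN.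
  - by lra.
  - by move=> i; have := hm i; lra.
  - by [].
  exists (- (W + 1)), xi'; split => //.
  - by move=> i; have := hm' i; lra.
  - by rewrite normrN ger0_norm //; lra.
  - by split => [|_]; [exact: ltW|].
  - by move=> v; rewrite ler_norml => /andP[? ?]; split => ?; lra.
have b_norm : `|b| <= W + 1 by rewrite ler_norml b_ge b_le.
exists b, xi; split => //.
- by split => // hlt; move: b_norm; rewrite leNgt hlt.
- by move=> v _; split => ?; lra.
Qed.

Definition sign_ok (R : numDomainType) (z : bool) (t : R) : Prop :=
  if z then 0 <= t else t <= 0.

Lemma bigM_iff (R : rcfType) (z : bool) (t M : R) :
  (- (1 - b2R R z) * M <= t /\ t <= b2R R z * M) <-> sign_ok z t /\ `|t| <= M.
Proof.
have -> : b2R R z = if z then 1 else 0 by case: z.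
rewrite /sign_ok ler_norml; case: z; rewrite ?subrr ?oppr0 ?subr0 ?mulN1r !mul0r ?mul1r;
  by split => [[? ?] | [? /andP[? ?]]]; split => //; try (apply/andP; split); lra.
Qed.

Lemma shrinks_sign (R : numDomainType) (z : bool) (t t' : R) :
  shrinks t t' -> sign_ok z t -> sign_ok z t'.
Proof. by case=> hp hn; case: z => /= h; [case/andP: (hp h) | case/andP: (hn h)]. Qed.

Lemma shrinks_norm (R : realDomainType) (t t' : R) : shrinks t t' -> `|t'| <= `|t|.
Proof.
case=> hp hn; have [t_ge0 | t_le0] := lerP 0 t.
  by case/andP: (hp t_ge0) => ? ?; rewrite !ger0_norm.
by case/andP: (hn (ltW t_le0)) => ? ?; rewrite !ler0_norm ?lerN2 // ltW.
Qed.

Definition complete_z m (Sp Sn : {set 'I_m}) (z : 'I_m -> bool) (j : 'I_m) : bool :=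
  if j \in Sp then true else if j \in Sn then false else z j.

Lemma complete_z_count (R : rcfType) m (Sp Sn : {set 'I_m}) (z : 'I_m -> bool) :
  \sum_(j < m) b2R R (complete_z Sp Sn z j)
  = #|Sp|%:R + \sum_(j < m | j \notin Sp :|: Sn) b2R R (z j).
Proof.
rewrite (bigID (mem (Sp :|: Sn))) /=; congr (_ + _); last first.
  apply: eq_bigr => j; rewrite in_setU negb_or /complete_z.
  by case/andP => /negbTE-> /negbTE->.
rewrite (bigID (mem Sp)) /= [X in _ + X]big1 ?addr0 => [|j]; last first.
  move=> /andP[+ /negbTE hSp]; rewrite in_setU hSp /= => hSn.
  by rewrite /complete_z hSp hSn.
rewrite (eq_bigl (fun j => j \in Sp)) => [|j]; last by rewrite in_setU andb_idl // => ->.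
by rewrite (eq_bigr (fun _ => 1)) => [|j hj]; rewrite ?sumr_const // /complete_z hj.
Qed.

Lemma complete_z_id m (Sp Sn : {set 'I_m}) (z : 'I_m -> bool) :
  (forall j, j \in Sp -> z j) -> (forall j, j \in Sn -> ~~ z j) ->
  complete_z Sp Sn z =1 z.
Proof.
move=> hp hn j; rewrite /complete_z.
by case: ifP => [/hp -> // | _]; case: ifP => [/hn/negbTE -> | _].
Qed.

Section Lemma51.
Variables (R : rcfType) (d n m : nat).
Variables (xl : 'I_n -> 'I_d -> R) (yl : 'I_n -> R) (xu : 'I_m -> 'I_d -> R).
Variables (C1 C2 : R) (tau : nat).
Hypotheses (hC1 : 0 < C1) (hC2 : 0 < C2).
Hypothesis hy : forall i, yl i = 1 \/ yl i = -1.
Hypotheses (hpos : exists i, yl i = 1) (hneg : exists i, yl i = -1).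

Local Notation Mx := (maxnorm xl xu).

Lemma clamp_classifier (w : 'I_d -> R) b (xi : 'I_n -> R) :
  (forall i, 1 - xi i <= yl i * (dot w (xl i) + b)) -> (forall i, 0 <= xi i) ->
  exists (b' : R) (xi' : 'I_n -> R),
    [/\ forall i, 1 - xi' i <= yl i * (dot w (xl i) + b'),
        forall i, 0 <= xi' i,
        `|b'| <= enorm w * Mx + 1,
        \sum_i xi' i <= \sum_i xi i
          /\ (enorm w * Mx + 1 < `|b| -> \sum_i xi' i < \sum_i xi i)
      & forall j, shrinks (dot w (xu j) + b) (dot w (xu j) + b')].
Proof.
move=> hm hxi.
have [b' [xi' [hm' hxi' hb' hsum hsh]]] := bias_clamp (a := fun i => dot w (xl i))
  hy hpos hneg (fun i => score_bound w (maxnorm_labeled xl xu i)) hm hxi.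
by exists b', xi'; split => // j; exact/hsh/score_bound/maxnorm_unlabeled.
Qed.

(* An optimal point of (P3), for any big-M constant, has a clamped bias:
   clamping would otherwise give a feasible point of smaller value. *)
Lemma P3_optimal_bias M w b xi e1 e2 z :
  P3_optimal C1 C2 xl yl xu tau M w b xi e1 e2 z -> `|b| <= enorm w * Mx + 1.
Proof.
case=> -[hm hbig hcnt hxi he] hmin.
have [b' [xi' [hm' hxi' _ [_ hlt] hsh]]] := clamp_classifier hm hxi.
rewrite leNgt; apply/negP => /hlt /(objF_lt_slack C2 hC1 w e1 e2) hF.
have feas : P3_feasible xl yl xu tau M w b' xi' e1 e2 z.
  split => // j; apply/bigM_iff; have /bigM_iff[hs hn] := hbig j.
  by split; [exact: shrinks_sign (hsh j) hs | exact: le_trans (shrinks_norm (hsh j)) hn].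
by have := hmin _ _ _ _ _ _ feas; rewrite leNgt hF.
Qed.

Lemma unlabeled_value_bound (S : R) w b j :
  enorm w <= S -> `|b| <= enorm w * Mx + 1 ->
  `|dot w (xu j) + b| <= 2 * S * Mx + 1.
Proof.
move=> hS hb; have hx := score_bound w (maxnorm_unlabeled xl xu j).
have Mx_ge0 : 0 <= Mx := le_trans (sqrtr_ge0 _) (maxnorm_unlabeled xl xu j).
have hSM : enorm w * Mx <= S * Mx by rewrite ler_wpM2r.
by apply: le_trans (ler_normD _ _) _; lra.
Qed.

Let nbar := #|[set i : 'I_n | yl i == -1]|.

(* The value of the trivial classifier; [bigM0] is [2 sqrt (2 budget) Mx + 1]. *)
Let budget := 2 * C1 * nbar%:R + C2 * (m - tau)%:R.

Lemma trivial_classifier_value :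
  objF C1 C2 (fun _ : 'I_d => 0) (fun i => 1 - yl i) 0 (m - tau)%:R = budget.
Proof.
rewrite /objF /enorm /dot big1 ?sqrtr0 => [|k _]; last by rewrite mul0r.
have -> : \sum_i (1 - yl i) = 2 * nbar%:R.
  rewrite (eq_bigr (fun i => if yl i == -1 then 2 else 0)) => [|i _]; last first.
    by case: (hy i) => ->; rewrite ?eqxx ?one_neq_opp1; lra.
  rewrite -big_mkcond /= (eq_bigl (fun i => i \in [set i | yl i == -1])) => [|i].
    by rewrite sumr_const mulr_natr.
  by rewrite inE.
by rewrite /budget; lra.
Qed.

Lemma trivial_classifier_feasible M :
  (tau <= m)%N -> 1 <= M ->
  P3_feasible xl yl xu tau M (fun _ => 0) 1 (fun i => 1 - yl i) 0 (m - tau)%:R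
    (fun _ => true).
Proof.
move=> htau hM; have dot0 x : dot (fun _ : 'I_d => 0) x = 0.
  by rewrite /dot big1 // => k _; rewrite mul0r.
split => [i | j | | i | ].
- by rewrite dot0 add0r mulr1; lra.
- by apply/bigM_iff; rewrite dot0 add0r /sign_ok normr1.
- by rewrite sumr_const card_ord subr0 -natrD subnKC // ler_nat.
- by case: (hy i) => ->; lra.
- by rewrite ler0n.
Qed.

Lemma P3_optimum_le_budget M ws bs xis es1 es2 zs :
  (tau <= m)%N -> 1 <= M ->
  P3_optimal C1 C2 xl yl xu tau M ws bs xis es1 es2 zs ->
  objF C1 C2 ws xis es1 es2 <= budget.
Proof.
move=> htau hM [_ hmin]; rewrite -trivial_classifier_value.
exact/hmin/trivial_classifier_feasible.
Qed.

Lemma P5_signs Sp Sn s M w b xi e1 e2 z :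
  P5_feasible xl yl xu tau Sp Sn s M w b xi e1 e2 z ->
  forall j, sign_ok (complete_z Sp Sn z j) (dot w (xu j) + b).
Proof.
case=> _ hout [hSp [hSn [hs0 hs1]]] _ _ j; rewrite /complete_z.
case: ifP => [/hSp // | jNSp]; case: ifP => [/hSn // | jNSn].
have [-> | jNs] := eqVneq j s.
  by case: (z s) hs1; rewrite /sign_ok // /b2R mul0r.
have /hout/bigM_iff[] // : j \notin s |: (Sp :|: Sn).
by rewrite !inE negb_or jNs jNSp jNSn.
Qed.

(* Part (a): clamping a feasible point of (P5) whose value is at most [budget]
   and completing its indicators yields a feasible point of (P3) with constant
   [bigM0] and no larger value; larger values exceed [f*] anyway. *)
Lemma P5_value_ge_optimum Sp Sn s M ws bs xis es1 es2 zs w b xi e1 e2 z :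
  (tau <= m)%N ->
  P3_optimal C1 C2 xl yl xu tau (bigM0 C1 C2 xl yl xu tau) ws bs xis es1 es2 zs ->
  P5_feasible xl yl xu tau Sp Sn s M w b xi e1 e2 z ->
  objF C1 C2 ws xis es1 es2 <= objF C1 C2 w xi e1 e2.
Proof.
move=> htau hopt h5.
have M0_ge1 : 1 <= bigM0 C1 C2 xl yl xu tau.
  rewrite /bigM0 lerDr mulr_ge0 ?mulr_ge0 ?sqrtr_ge0 //.
  by case: hneg => i _; exact: le_trans (sqrtr_ge0 _) (maxnorm_labeled xl xu i).
have fstar_le := P3_optimum_le_budget htau M0_ge1 hopt.
have [budget_lt | F_le] := ltrP budget (objF C1 C2 w xi e1 e2).
  exact: le_trans fstar_le (ltW budget_lt).
have signs := P5_signs h5.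
case: h5 => hm _ _ hcnt [hxi he1 he2].
have hw : enorm w <= Num.sqrt (2 * budget).
  apply: le_trans (enorm_le_objF hC1 hC2 w hxi he1 he2) _.
  by rewrite ler_wsqrtr // ler_pM2l.
have [b' [xi' [hm' hxi' hb' [hsum _] hsh]]] := clamp_classifier hm hxi.
have feas : P3_feasible xl yl xu tau (bigM0 C1 C2 xl yl xu tau)
              w b' xi' e1 e2 (complete_z Sp Sn z).
  split; rewrite ?complete_z_count // => j; apply/bigM_iff; split.
    exact: shrinks_sign (hsh j) (signs j).
  exact: unlabeled_value_bound.
exact: le_trans (hopt.2 _ _ _ _ _ _ feas) (objF_le_slack _ hC1 _ _ _ hsum).
Qed.

Lemma optimum_P5_feasible (Sp Sn : {set 'I_m}) s M fbar ws bs xis es1 es2 zs :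
  P3_optimal C1 C2 xl yl xu tau M ws bs xis es1 es2 zs ->
  objF C1 C2 ws xis es1 es2 <= fbar ->
  (forall j, j \in Sp -> 0 < dot ws (xu j) + bs) ->
  (forall j, j \in Sn -> dot ws (xu j) + bs < 0) ->
  0 <= dot ws (xu s) + bs ->
  P5_feasible xl yl xu tau Sp Sn s (2 * Num.sqrt (2 * fbar) * Mx + 1)
    ws bs xis es1 es2 zs.
Proof.
move=> hopt hfbar hSp hSn hs.
have hb := P3_optimal_bias hopt.
case: hopt => -[hm hbig hcnt hxi [he1 he2]] _.
have signs j : sign_ok (zs j) (dot ws (xu j) + bs) by have /bigM_iff[] := hbig j.
have hw : enorm ws <= Num.sqrt (2 * fbar).
  apply: le_trans (enorm_le_objF hC1 hC2 ws hxi he1 he2) _.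
  by rewrite ler_wsqrtr // ler_pM2l.
have bound j := unlabeled_value_bound j hw hb.
have zs_Sp j : j \in Sp -> zs j.
  by move=> /hSp; have := signs j; case: (zs j) => //= h; rewrite ltNge h.
have zs_Sn j : j \in Sn -> ~~ zs j.
  by move=> /hSn; have := signs j; case: (zs j) => //= h; rewrite ltNge h.
split => //.
- by move=> j _; apply/bigM_iff.
- split; first by move=> j /hSp /ltW.
  split; first by move=> j /hSn /ltW.
  split => //; have := signs s; have := bound s; rewrite /sign_ok /b2R.
  by case: (zs s) => /= h1 h2; rewrite ?mul0r ?mul1r // (le_trans (ler_norm _) h1).
- have same_z j : b2R R (complete_z Sp Sn zs j) = b2R R (zs j).
    by rewrite (complete_z_id zs_Sp zs_Sn).
  by rewrite -complete_z_count (eq_bigr _ (fun j _ => same_z j)).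
Qed.

End Lemma51.

Theorem lemma5p1 (R : rcfType) (d n m : nat)
  (xl : 'I_n -> 'I_d -> R) (yl : 'I_n -> R) (xu : 'I_m -> 'I_d -> R)
  (C1 C2 : R) (tau : nat)
  (hC1 : 0 < C1) (hC2 : 0 < C2)
  (hy : forall i, yl i = 1 \/ yl i = -1)
  (hpos : exists i, yl i = 1) (hneg : exists i, yl i = -1)
  (htau : (tau <= m)%N)
  (wb : 'I_d -> R) (bb : R) (xib : 'I_n -> R) (etab1 etab2 : R) (zb : 'I_m -> bool)
  (hfeas : P3_feasible xl yl xu tau (bigM0 C1 C2 xl yl xu tau)
             wb bb xib etab1 etab2 zb)
  (ws : 'I_d -> R) (bs : R) (xis : 'I_n -> R) (etas1 etas2 : R) (zs : 'I_m -> bool)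
  (hopt : P3_optimal C1 C2 xl yl xu tau (bigM0 C1 C2 xl yl xu tau)
             ws bs xis etas1 etas2 zs)
  (Sp Sn : {set 'I_m}) (s : 'I_m)
  (hSp : forall j, j \in Sp -> 0 < dot ws (xu j) + bs)
  (hSn : forall j, j \in Sn -> dot ws (xu j) + bs < 0)
  (hs : s \notin Sp :|: Sn)
  (hsneg : dot wb (xu s) + bb < 0) :
  let fbar := objF C1 C2 wb xib etab1 etab2 in
  let fstar := objF C1 C2 ws xis etas1 etas2 in
  let M := 2 * Num.sqrt (2 * fbar) * maxnorm xl xu + 1 in
  (forall w b xi eta1 eta2 z,
     P5_feasible xl yl xu tau Sp Sn s M w b xi eta1 eta2 z ->
     fstar <= objF C1 C2 w xi eta1 eta2)
  /\
  (forall w b xi eta1 eta2 z,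
     P5_optimal C1 C2 xl yl xu tau Sp Sn s M w b xi eta1 eta2 z ->
     fbar < objF C1 C2 w xi eta1 eta2 ->
     dot ws (xu s) + bs < 0).
Proof.
move=> fbar fstar M.
split=> [w b xi e1 e2 z | w b xi e1 e2 z [h5 hmin5] fbar_lt].
  exact: (P5_value_ge_optimum hC1 hC2 hy hpos hneg htau hopt).
have fstar_le : fstar <= fbar := hopt.2 _ _ _ _ _ _ hfeas.
rewrite ltNge; apply/negP => s_nonneg.
have optimum_in_P5 := optimum_P5_feasible hC1 hC2 hy hpos hneg
  hopt fstar_le hSp hSn s_nonneg.
have := hmin5 _ _ _ _ _ _ optimum_in_P5.
by rewrite /fstar leNgt (le_lt_trans fstar_le fbar_lt).
Qed.
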